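(* The relation $\le_{\mathrm{AC}}$ on promise CSPs (of finite templates) is transitive: if $\mathrm{PCSP}(\mathbf A,\mathbf A')\le_{\mathrm{AC}}\mathrm{PCSP}(\mathbf B,\mathbf B')$ and $\mathrm{PCSP}(\mathbf B,\mathbf B')\le_{\mathrm{AC}}\mathrm{PCSP}(\mathbf C,\mathbf C')$, then $\mathrm{PCSP}(\mathbf A,\mathbf A')\le_{\mathrm{AC}}\mathrm{PCSP}(\mathbf C,\mathbf C')$.
   Context: Structures. A (multisorted relational) signature consists of types and relation symbols, each symbol $R$ having an arity $\mathrm{ar}_R$, a tuple of types. A structure $\mathbf A$ consists of a set $A_t$ per type and relations $R^{\mathbf A}\subseteq A_{\mathrm{ar}_R(1)}\times\dots\times A_{\mathrm{ar}_R(k)}$. A homomorphism is a type-preserving family of maps preserving all relations; write $\mathbf A\to\mathbf B$. For a finite set $X$, $\mathbf B^X$ has domains $B_t^X$ and $(b_1,\dots,b_m)\in R^{\mathbf B^X}$ iff $(b_1(i),\dots,b_m(i))\in R^{\mathbf B}$ for all $i\in X$. Promise CSP. A promise template is a pair $(\mathbf A,\mathbf A')$ of finite structures of the same signature with $\mathbf A\to\mathbf A'$. $\mathrm{PCSP}(\mathbf A,\mathbf A')$: given finite $\mathbf X$, answer yes if $\mathbf X\to\mathbf A$, no if $\mathbf X\not\to\mathbf A'$. A map $\psi$ is a reduction from $\mathrm{PCSP}(\mathbf A,\mathbf A')$ to $\mathrm{PCSP}(\mathbf B,\mathbf B')$ if $\mathbf X\to\mathbf A\Rightarrow\psi(\mathbf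 X)\to\mathbf B$ and $\psi(\mathbf X)\to\mathbf B'\Rightarrow\mathbf X\to\mathbf A'$. Arc-consistency reduction. For a $\Pi$-structure $\mathbf A$ and a $\Sigma$-structure $\mathbf B$, $\kappa_{\mathrm{arc}}^{\mathbf A,\mathbf B}$ maps a $\Pi$-structure $\mathbf X$ to the $\Sigma$-structure constructed as follows: (1) for each $v\in X_t$ set $\mathcal F_v=A_t$; (2) for each constraint $(v_1,\dots,v_k)\in R^{\mathbf X}$ and each $i$, replace $\mathcal F_{v_i}$ by the $i$-th projection of $R^{\mathbf A}\cap(\mathcal F_{v_1}\times\dots\times\mathcal F_{v_k})$; (3) repeat (2) until stable; (4) for each $v$ take a copy of $\mathbf B^{\mathcal F_v}$ with elements $(v;b)$; (5) for each constraint $c=((v_1,\dots,v_k),R)$ take a copy of $\mathbf B^{\mathcal C_c}$ with elements $(c;b)$, where $\mathcal C_c=R^{\mathbf A}\cap(\mathcal F_{v_1}\times\dots\times\mathcal F_{v_k})$; (6) for each such constraint, $i\in[k]$ and $b\colon\mathcal F_{v_i}\to B_s$, identify $(c;b\circ\pi_i)$ with $(v_i;b)$, $\pi_i$ the $i$-th projection; output the quotient by the generated equivalence relation, with relations the images of those of the copies. We write $\mathrm{PCSP}(\mathbf A,\mathbf A')\le_{\mathrm{AC}}\mathrm{PCSP}(\mathbf B,\mathbf B')$ if $\kappa_{\mathrm{arc}}^{\mathbf A,\mathbf B}$ is a reduction between them. *)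

From Stdlib Require Import List Relations.
Import ListNotations.
Set Implicit Arguments.
Unset Strict Implicit.

Definition finite_type (T : Type) : Prop := exists l : list T, forall x, In x l.

Record signature := Signature {
  sort : Type;
  sym : Type;
  ar : sym -> list sort }.

Definition finite_sig (S : signature) : Prop :=
  finite_type (sort S) /\ finite_type (sym S).

(* A structure: a carrier, each element tagged with its type (so that
   A_t = {x | srt x = t}), and relations given as predicates on tuples. *)
Record structure (S : signature) := Structure {
  carrier : Type;
  srt : carrier -> sort S;
  rel : sym S -> list carrier -> Prop }.

Arguments carrier {S} _.
Arguments srt {S} _ _.
Arguments rel {S} _ _ _.

Definition wf_structure (S : signature) (A : structure S) : Prop :=
  forall R xs, rel A R xs -> map (srt A) xs = ar R.

Definition finite_structure (S : signature) (A : structure S) : Prop :=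
  finite_type (carrier A).

Definition is_hom (S : signature) (A B : structure S)
  (f : carrier A -> carrier B) : Prop :=
  (forall x, srt B (f x) = srt A x) /\
  (forall R xs, rel A R xs -> rel B R (map f xs)).

Arguments is_hom {S} A B f.

Definition hom (S : signature) (A B : structure S) : Prop :=
  exists f, is_hom A B f.

(* The power B^I (I a type of indices): the domain of type s is B_s^I. *)
Definition pow_carrier (S : signature) (B : structure S) (I : Type) : Type :=
  { p : sort S * (I -> carrier B) | forall i, srt B (snd p i) = fst p }.

Definition pow (S : signature) (B : structure S) (I : Type) : structure S :=
  @Structure S (pow_carrier B I)
    (fun p => fst (proj1_sig p))
    (fun R ps => map (fun p => fst (proj1_sig p)) ps = ar R /\
                 forall i, rel B R (map (fun p => snd (proj1_sig p) i) ps)).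

Section Kappa.
Variables (P S : signature) (A : structure P) (B : structure S)
          (X : structure P).

(* Step (1)-(3): arc consistency.  A family F assigns to each v in X a subset
   of A_{t(v)}. *)
Definition family := carrier X -> carrier A -> Prop.

Definition F_init : family := fun v a => srt A a = srt X v.

Definition in_constraint (F : family) (R : sym P) (vs : list (carrier X))
  (as_ : list (carrier A)) : Prop :=
  rel A R as_ /\ Forall2 F vs as_.

Definition ac_step (F : family) : family := fun v a =>
  F v a /\
  forall R vs i, rel X R vs -> nth_error vs i = Some v ->
    exists as_, in_constraint F R vs as_ /\ nth_error as_ i = Some a.

Definition F_ac : family := fun v a => forall n, Nat.iter n ac_step F_init v a.

Definition Fsub (v : carrier X) : Type := { a : carrier A | F_ac v a }.

Definition constraint : Type :=
  { p : sym P * list (carrier X) | rel X (fst p) (snd p) }.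

Definition Csub (c : constraint) : Type :=
  { as_ : list (carrier A) |
      in_constraint F_ac (fst (proj1_sig c)) (snd (proj1_sig c)) as_ }.

(* Steps (4),(5): disjoint union of the copies B^{F_v} and B^{C_c}. *)
Definition pre : Type :=
  ({ v : carrier X & pow_carrier B (Fsub v) } +
   { c : constraint & pow_carrier B (Csub c) })%type.

Definition pre_srt (e : pre) : sort S :=
  match e with
  | inl (existT _ _ p) => fst (proj1_sig p)
  | inr (existT _ _ p) => fst (proj1_sig p)
  end.

(* Step (6): (c; b o pi_i) is identified with (v_i; b).  The equation
   b' = b o pi_i is written pointwise: pi_i maps x in C_c to the element
   of F_{v_i} whose value is the i-th coordinate of x. *)
Definition gen (e1 e2 : pre) : Prop :=
  match e1, e2 with
  | inr (existT _ c p'), inl (existT _ v p) =>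
      fst (proj1_sig p') = fst (proj1_sig p) /\
      exists i, nth_error (snd (proj1_sig c)) i = Some v /\
        forall (x : Csub c) (y : Fsub v),
          nth_error (proj1_sig x) i = Some (proj1_sig y) ->
          snd (proj1_sig p') x = snd (proj1_sig p) y
  | _, _ => False
  end.

Definition pre_equiv : relation pre := clos_refl_sym_trans pre gen.

(* the quotient: equivalence classes, tagged with their (common) type *)
Definition kappa_carrier : Type :=
  { q : sort S * (pre -> Prop) |
      exists e, pre_srt e = fst q /\ snd q = pre_equiv e }.

Definition cls (e : pre) : kappa_carrier :=
  exist _ (pre_srt e, pre_equiv e) (ex_intro _ e (conj eq_refl eq_refl)).

Definition copy_rel (R : sym S) (es : list pre) : Prop :=
  (exists v (ps : list (pow_carrier B (Fsub v))),
      rel (pow B (Fsub v)) R ps /\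
      es = map (fun p => inl (existT _ v p)) ps) \/
  (exists c (ps : list (pow_carrier B (Csub c))),
      rel (pow B (Csub c)) R ps /\
      es = map (fun p => inr (existT _ c p)) ps).

Definition kappa_arc : structure S :=
  @Structure S kappa_carrier
    (fun q => fst (proj1_sig q))
    (fun R qs => exists es, copy_rel R es /\ qs = map cls es).

End Kappa.

Definition ac_reduces (P S : signature) (A A' : structure P)
  (B B' : structure S) : Prop :=
  forall X : structure P, wf_structure X -> finite_structure X ->
    (hom X A -> hom (kappa_arc A B X) B) /\
    (hom (kappa_arc A B X) B' -> hom X A').

Definition promise_template (P : signature) (A A' : structure P) : Prop :=
  finite_sig P /\ wf_structure A /\ wf_structure A' /\
  finite_structure A /\ finite_structure A' /\ hom A A'.

From Stdlib Require Import List Relations Lia.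
From Stdlib Require Import Classical ClassicalEpsilon FunctionalExtensionality
  ProofIrrelevance PropExtensionality.
Import ListNotations.
Set Implicit Arguments.

(* Completeness of [kappa_arc A C] holds for every template: a homomorphism
   [h : X -> A] picks the point [h v] in each [F_v] (arc consistency never
   prunes it) and the tuple [h(c)] in each [C_c]; evaluating every copy of a
   power of [C] at these points gives [kappa_arc A C X -> C].

   Soundness reduces to the comparison homomorphism
     kappa_arc B C (kappa_arc A B X)  -->  kappa_arc A C X,
   which exists whenever [A] is finite.  Writing [Y = kappa_arc A B X], each
   element [y] of [Y] is represented by an element of a copy [B^I] (with [I]
   some [F_v] or [C_c]) whose values all survive arc consistency for [Y] over
   [B], i.e. a map [I -> F_y]; each constraint of [Y] comes from a relation of
   one copy [B^I], whose columns give a map [I -> C_d].  Precomposing with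
   these maps sends the copies of [C^{F_y}] and [C^{C_d}] into copies of
   [C^I], compatibly with all identifications.  Given [kappa_arc A C X -> C'],
   we get [kappa_arc B C Y -> C'], hence [Y -> B'] by the second reduction
   ([Y] is finite), hence [X -> A'] by the first. *)
Fixpoint lists (U : Type) (l : list U) (n : nat) : list (list U) :=
  match n with
  | 0 => [[]]
  | S n => flat_map (fun a => map (cons a) (lists l n)) l
  end.

Lemma in_lists (U : Type) (l : list U) :
  (forall x, In x l) -> forall t, In t (lists l (length t)).
Proof.
  intros Hl t; induction t as [|a t IH]; simpl; auto.
  apply in_flat_map. exists a; split; auto. apply in_map; auto.
Qed.

Lemma finite_sub_list (T : Type) (Pr : T -> Prop) (l : list T) :
  (forall x, Pr x -> In x l) -> finite_type {x | Pr x}.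
Proof.
  intros Hl.
  exists (flat_map (fun x => match excluded_middle_informative (Pr x) with
                             | left h => [exist Pr x h] | right _ => [] end) l).
  intros [x h]. apply in_flat_map. exists x. split; [apply Hl; auto|].
  destruct (excluded_middle_informative (Pr x)) as [h'|n]; [|contradiction].
  rewrite (proof_irrelevance _ h h'). simpl; auto.
Qed.

Lemma finite_sub (T : Type) (Pr : T -> Prop) :
  finite_type T -> finite_type {x | Pr x}.
Proof. intros [l Hl]. apply (@finite_sub_list _ _ l). auto. Qed.

Lemma finite_prod (U V : Type) :
  finite_type U -> finite_type V -> finite_type (U * V).
Proof.
  intros [lu Hu] [lv Hv]. exists (list_prod lu lv). intros [u v]. apply in_prod; auto.
Qed.

Lemma finite_sum (U V : Type) :
  finite_type U -> finite_type V -> finite_type (U + V).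
Proof.
  intros [lu Hu] [lv Hv]. exists (map inl lu ++ map inr lv).
  intros [u|v]; apply in_or_app; [left|right]; apply in_map; auto.
Qed.

Lemma finite_sigT (I : Type) (F : I -> Type) :
  finite_type I -> (forall i, finite_type (F i)) -> finite_type {i : I & F i}.
Proof.
  intros [li Hi] HF.
  assert (Hcover : forall l : list I, exists L,
            forall i, In i l -> forall x, In (existT F i x) L).
  { induction l as [|i l [L HL]].
    - exists []. intros i [].
    - destruct (HF i) as [lx Hx]. exists (map (existT F i) lx ++ L).
      intros j [<-|Hj] x; apply in_or_app; [left; apply in_map; auto|right; auto]. }
  destruct (Hcover li) as [L HL]. exists L. intros [i x]. apply HL; auto.
Qed.

Lemma finite_fun (I J : Type) :
  finite_type I -> finite_type J -> finite_type (I -> J).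
Proof.
  intros [li Hi] [lj Hj].
  assert (Hcover : forall l : list I, exists L : list (I -> J),
            forall f, exists g, In g L /\ forall i, In i l -> g i = f i).
  { induction l as [|i l [L HL]].
    - destruct (classic (inhabited (I -> J))) as [[f0]|Hempty].
      + exists [f0]. intros f. exists f0. split; simpl; auto. intros _ [].
      + exists []. intros f. exfalso. apply Hempty. constructor. exact f.
    - set (upd (g : I -> J) (b : J) :=
             fun j => if excluded_middle_informative (j = i) then b else g j).
      exists (flat_map (fun g => map (upd g) lj) L).
      intros f. destruct (HL f) as [g [Hg Hgf]]. exists (upd g (f i)). split.
      + apply in_flat_map. exists g. split; auto. apply in_map; auto.
      + intros j Hij. unfold upd.
        destruct (excluded_middle_informative (j = i)) as [->|Hne]; auto.
        apply Hgf. destruct Hij; [congruence|auto]. }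
  destruct (Hcover li) as [L HL]. exists L. intros f.
  destruct (HL f) as [g [Hg Hgf]].
  replace f with g; auto. apply functional_extensionality. intros; apply Hgf; auto.
Qed.

Lemma finite_image (U V : Type) (f : U -> V) :
  finite_type U -> (forall v, exists u, v = f u) -> finite_type V.
Proof.
  intros [lu Hu] Hsurj. exists (map f lu). intros v.
  destruct (Hsurj v) as [u ->]. apply in_map; auto.
Qed.

Lemma decreasing_common_witness (U : Type) (L : list U) (Pn : nat -> U -> Prop) :
  (forall n m, n <= m -> forall t, Pn m t -> Pn n t) ->
  (forall n, exists t, In t L /\ Pn n t) -> exists t, In t L /\ forall n, Pn n t.
Proof.
  intros Hdec. induction L as [|t L IH]; intros Hwit.
  - destruct (Hwit 0) as [t [[] _]].
  - destruct (classic (forall n, Pn n t)) as [Ht|Ht]; [exists t; simpl; auto|].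
    apply not_all_ex_not in Ht. destruct Ht as [N HN].
    destruct IH as [t' [Ht' Hall]]; [|exists t'; simpl; auto].
    intros n. destruct (Hwit (max n N)) as [t' [[<-|Hin] Hp]].
    + exfalso. apply HN. eapply Hdec; [|exact Hp]. lia.
    + exists t'. split; auto. eapply Hdec; [|exact Hp]. lia.
Qed.

Lemma Forall2_forall_n (U V : Type) (R : nat -> U -> V -> Prop) l1 l2 :
  (forall n, Forall2 (R n) l1 l2) -> Forall2 (fun x y => forall n, R n x y) l1 l2.
Proof.
  revert l2; induction l1 as [|x l1 IH]; intros [|y l2] H;
    try (specialize (H 0); inversion H; fail); constructor.
  - intros n. specialize (H n). inversion H; auto.
  - apply IH. intros n. specialize (H n). inversion H; auto.
Qed.

Lemma Forall2_map_both (U V W : Type) (R : V -> W -> Prop) (f : U -> V) (g : U -> W) l :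
  (forall x, In x l -> R (f x) (g x)) -> Forall2 R (map f l) (map g l).
Proof. induction l; simpl; intros H; constructor; auto. Qed.

Lemma Forall2_nth_error (U V : Type) (R : U -> V -> Prop) l1 l2 i x :
  Forall2 R l1 l2 -> nth_error l1 i = Some x ->
  exists y, nth_error l2 i = Some y /\ R x y.
Proof.
  intros H; revert i; induction H; intros [|i] Hi; simpl in *; try discriminate.
  - inversion Hi; subst; eauto.
  - eauto.
Qed.

Lemma nth_error_map_inv (U V : Type) (f : U -> V) l i y :
  nth_error (map f l) i = Some y -> exists x, nth_error l i = Some x /\ y = f x.
Proof.
  rewrite nth_error_map. destruct (nth_error l i); simpl; intros H; inversion H; eauto.
Qed.

Definition precomp (T : signature) (C : structure T) (I J : Type)
  (g : pow_carrier C J) (k : I -> J) : pow_carrier C I :=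
  exist (fun p : sort T * (I -> carrier C) => forall i, srt C (snd p i) = fst p)
    (fst (proj1_sig g), fun i => snd (proj1_sig g) (k i)) (fun i => proj2_sig g (k i)).

Lemma pow_ext (T : signature) (C : structure T) (I : Type) (p1 p2 : pow_carrier C I) :
  fst (proj1_sig p1) = fst (proj1_sig p2) ->
  (forall i, snd (proj1_sig p1) i = snd (proj1_sig p2) i) -> p1 = p2.
Proof.
  destruct p1 as [[s1 f1] h1], p2 as [[s2 f2] h2]; simpl. intros -> Hf.
  assert (f1 = f2) by (apply functional_extensionality; auto). subst.
  f_equal. apply proof_irrelevance.
Qed.

Lemma pow_rel_precomp (T : signature) (C : structure T) (I J : Type) R
  (gs : list (pow_carrier C J)) (k : I -> J) :
  rel (pow C J) R gs -> rel (pow C I) R (map (fun g => precomp g k) gs).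
Proof.
  intros [Hsrt Hrel]. split; simpl; rewrite ?map_map; simpl.
  - exact Hsrt.
  - intros i. rewrite map_map. apply (Hrel (k i)).
Qed.

Definition column (S : signature) (B : structure S) (I : Type)
  (ps : list (pow_carrier B I)) (i : I) : list (carrier B) :=
  map (fun p => snd (proj1_sig p) i) ps.

Lemma hom_comp (S : signature) (A B C : structure S) :
  hom A B -> hom B C -> hom A C.
Proof.
  intros [f [Hf1 Hf2]] [g [Hg1 Hg2]]. exists (fun x => g (f x)). split.
  - intros x. rewrite Hg1, Hf1; auto.
  - intros R xs H. rewrite <- map_map. auto.
Qed.

Section Copies.
Variables (P S : signature) (A : structure P) (B : structure S) (X : structure P).

(* The copies of powers of [B] in [kappa_arc A B X] are indexed by sites: a
   variable [v] (a copy of [B^{F_v}]) or a constraint [c] (a copy of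
   [B^{C_c}]).  [mk s] embeds the copy of site [s] into [pre A B X]. *)
Definition site : Type := (carrier X + constraint X)%type.

Definition slot (s : site) : Type :=
  match s with inl v => Fsub A v | inr c => Csub A c end.

Definition mk (s : site) : pow_carrier B (slot s) -> pre A B X :=
  match s return pow_carrier B (slot s) -> pre A B X with
  | inl v => fun p => inl (existT _ v p)
  | inr c => fun p => inr (existT _ c p)
  end.

Definition site_of (e : pre A B X) : site :=
  match e with inl (existT _ v _) => inl v | inr (existT _ c _) => inr c end.

Definition pow_of (e : pre A B X) : pow_carrier B (slot (site_of e)) :=
  match e as e0 return pow_carrier B (slot (site_of e0)) with
  | inl (existT _ _ p) => p
  | inr (existT _ _ p) => p
  end.

Lemma mk_of (e : pre A B X) : mk (site_of e) (pow_of e) = e.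
Proof. destruct e as [[v p]|[c p]]; reflexivity. Qed.

Lemma pre_srt_mk (s : site) (p : pow_carrier B (slot s)) :
  pre_srt (mk s p) = fst (proj1_sig p).
Proof. destruct s; reflexivity. Qed.

Lemma pre_srt_of (e : pre A B X) : pre_srt e = fst (proj1_sig (pow_of e)).
Proof. destruct e as [[v p]|[c p]]; reflexivity. Qed.

Lemma copy_rel_mk R (es : list (pre A B X)) :
  copy_rel R es <->
  exists s (ps : list (pow_carrier B (slot s))),
    rel (pow B (slot s)) R ps /\ es = map (mk s) ps.
Proof.
  split.
  - intros [[v [ps H]]|[c [ps H]]]; [exists (inl v)|exists (inr c)]; eauto.
  - intros [[v|c] [ps H]]; [left|right]; eauto.
Qed.

Lemma pre_equiv_srt (e1 e2 : pre A B X) : pre_equiv e1 e2 -> pre_srt e1 = pre_srt e2.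
Proof.
  induction 1 as [e1 e2 Hgen| | |]; try congruence.
  destruct e1 as [[v p]|[c p]]; destruct e2 as [[v' p']|[c' p']]; simpl in *; tauto.
Qed.

Lemma cls_eq (e1 e2 : pre A B X) : cls e1 = cls e2 <-> pre_equiv e1 e2.
Proof.
  split.
  - intros H. apply (f_equal (fun q => snd (proj1_sig q))) in H. simpl in H.
    rewrite H. apply rst_refl.
  - intros H. unfold cls.
    assert (Hcls : pre_equiv e1 = pre_equiv e2).
    { apply functional_extensionality; intros e. apply propositional_extensionality.
      split; intros H'; eapply rst_trans; eauto using rst_sym. }
    generalize (ex_intro (fun e : pre A B X => pre_srt e = fst (pre_srt e1, pre_equiv e1) /\
            snd (pre_srt e1, pre_equiv e1) = pre_equiv e) e1 (conj eq_refl eq_refl)).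
    generalize (ex_intro (fun e : pre A B X => pre_srt e = fst (pre_srt e2, pre_equiv e2) /\
            snd (pre_srt e2, pre_equiv e2) = pre_equiv e) e2 (conj eq_refl eq_refl)).
    rewrite (pre_equiv_srt H), Hcls. intros h1 h2. rewrite (proof_irrelevance _ h1 h2).
    reflexivity.
Qed.

Definition rep (q : carrier (kappa_arc A B X)) : pre A B X :=
  proj1_sig (constructive_indefinite_description _ (proj2_sig q)).

Lemma cls_rep (q : carrier (kappa_arc A B X)) : cls (rep q) = q.
Proof.
  unfold rep. destruct (constructive_indefinite_description _ (proj2_sig q)) as [e [H1 H2]].
  simpl. destruct q as [[s Pr] h]. simpl in *. subst. unfold cls.
  f_equal. apply proof_irrelevance.
Qed.

Lemma kappa_hom_of_pre (D : structure S) (f : pre A B X -> carrier D) :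
  (forall e1 e2, gen e1 e2 -> f e1 = f e2) ->
  (forall e, srt D (f e) = pre_srt e) ->
  (forall R s (ps : list (pow_carrier B (slot s))),
      rel (pow B (slot s)) R ps -> rel D R (map (fun p => f (mk s p)) ps)) ->
  hom (kappa_arc A B X) D.
Proof.
  intros Hgen Hsrt Hrel.
  assert (Hinv : forall e1 e2, pre_equiv e1 e2 -> f e1 = f e2)
    by (induction 1; eauto; congruence).
  assert (Hcls : forall e, f (rep (cls e)) = f e)
    by (intros e; apply Hinv, cls_eq, cls_rep).
  exists (fun q => f (rep q)). split.
  - intros q. rewrite <- (cls_rep q), Hcls, Hsrt. reflexivity.
  - intros R qs [es [Hes ->]]. apply copy_rel_mk in Hes.
    destruct Hes as [s [ps [Hps ->]]].
    rewrite !map_map. rewrite (map_ext _ _ (fun p => Hcls (mk s p))). auto.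
Qed.

Lemma kappa_wf : wf_structure (kappa_arc A B X).
Proof.
  intros R qs [es [Hes ->]]. apply copy_rel_mk in Hes.
  destruct Hes as [s [ps [[Hsrt _] ->]]]. rewrite !map_map.
  rewrite <- Hsrt. apply map_ext. intros p. apply pre_srt_mk.
Qed.

Lemma kappa_finite :
  finite_sig P -> finite_type (sort S) -> finite_structure A ->
  finite_structure B -> finite_structure X -> wf_structure X ->
  finite_structure (kappa_arc A B X).
Proof.
  intros [_ [lsym Hsym]] HS HA HB HX wfX.
  assert (Hpow : forall I, finite_type I -> finite_type (pow_carrier B I)).
  { intros I HI. apply finite_sub, finite_prod, finite_fun; auto. }
  assert (Hsites : finite_type {s : site & pow_carrier B (slot s)}).
  { destruct HX as [lX HlX]. apply finite_sigT.
    - apply finite_sum; [exists lX; exact HlX|].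
      apply (@finite_sub_list _ _
               (flat_map (fun R => map (pair R) (lists lX (length (ar R)))) lsym)).
      intros [R vs] H. apply in_flat_map. exists R. split; auto. apply in_map.
      rewrite <- (wfX R vs H), length_map. apply in_lists; auto.
    - intros [v|c]; apply Hpow; [apply finite_sub; exact HA|].
      destruct HA as [lA HlA].
      apply (@finite_sub_list _ _ (lists lA (length (snd (proj1_sig c))))).
      intros t [_ Ht]. rewrite (Forall2_length Ht). apply in_lists; auto. }
  apply (finite_image (fun sp => cls (mk (projT1 sp) (projT2 sp))) Hsites).
  intros q. exists (existT _ (site_of (rep q)) (pow_of (rep q))).
  simpl. rewrite mk_of, cls_rep. reflexivity.
Qed.

End Copies.

Arguments mk {P S A B X} s _.

Section ArcConsistency.
Variables (P : signature) (A : structure P) (X : structure P).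

Definition ac_closed (V : family A X) : Prop :=
  forall v a, V v a -> srt A a = srt X v /\
    forall R vs i, rel X R vs -> nth_error vs i = Some v ->
      exists as_, in_constraint V R vs as_ /\ nth_error as_ i = Some a.

Lemma ac_closed_F_ac (V : family A X) :
  ac_closed V -> forall v a, V v a -> F_ac v a.
Proof.
  intros HV v a Hva n. revert v a Hva. induction n as [|n IH]; intros v a Hva.
  - apply (proj1 (HV v a Hva)).
  - split; [auto|]. intros R vs i HR Hi.
    destruct (proj2 (HV v a Hva) R vs i HR Hi) as [t [[Hr Hf] Ht]].
    exists t. split; [split|]; auto. eapply Forall2_impl; [|exact Hf]. auto.
Qed.

Definition ac_iter (n : nat) : family A X := Nat.iter n (@ac_step P A X) (@F_init P A X).

Lemma ac_iter_antitone n m v a : n <= m -> ac_iter m v a -> ac_iter n v a.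
Proof. induction 1; auto. intros H0. apply IHle, (proj1 H0). Qed.

(* For finite [A] the decreasing iteration stabilises, so [F_ac] is itself
   arc-consistent: it is the largest arc-consistent family. *)
Lemma F_ac_closed : finite_structure A -> ac_closed (@F_ac P A X).
Proof.
  intros [lA HA] v a Hva. split; [apply (Hva 0)|]. intros R vs i HR Hi.
  destruct (@decreasing_common_witness _ (lists lA (length vs))
    (fun n t => rel A R t /\ Forall2 (ac_iter n) vs t /\
                nth_error t i = Some a)) as [t [_ Ht]].
  - intros n m Hnm t [H1 [H2 H3]]. split; [|split]; auto.
    eapply Forall2_impl; [|exact H2]. intros; eapply ac_iter_antitone; eauto.
  - intros n. destruct (proj2 (Hva (S n)) R vs i HR Hi) as [t [[H1 H2] H3]].
    exists t. split; [rewrite (Forall2_length H2); apply in_lists; auto|auto].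
  - exists t. split; [split|].
    + apply (Ht 0).
    + apply Forall2_forall_n. intros n; apply (Ht n).
    + apply (Ht 0).
Qed.

Lemma hom_F_ac (h : carrier X -> carrier A) : is_hom X A h -> forall v, F_ac v (h v).
Proof.
  intros [Hsrt Hrel] v. apply (ac_closed_F_ac (V := fun v a => a = h v)); auto.
  clear v. intros v a ->. split; auto. intros R vs i HR Hi.
  exists (map h vs). split; [split|].
  - auto.
  - rewrite <- (map_id vs) at 1. apply Forall2_map_both. auto.
  - rewrite nth_error_map, Hi. reflexivity.
Qed.

End ArcConsistency.

Lemma kappa_complete (P S : signature) (A : structure P) (B : structure S)
  (X : structure P) : hom X A -> hom (kappa_arc A B X) B.
Proof.
  intros [h Hh].
  assert (Hc : forall c : constraint X, in_constraint (@F_ac P A X) (fst (proj1_sig c))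
                 (snd (proj1_sig c)) (map h (snd (proj1_sig c)))).
  { intros [[R vs] HR]; simpl. split; [apply Hh; auto|].
    rewrite <- (map_id vs) at 1. apply Forall2_map_both. intros; apply hom_F_ac; auto. }
  pose (point := fun s : site X =>
         match s return slot A s with
         | inl v => exist _ (h v) (hom_F_ac Hh v)
         | inr c => exist _ (map h (snd (proj1_sig c))) (Hc c)
         end).
  apply (kappa_hom_of_pre B (fun e => snd (proj1_sig (pow_of e)) (point (site_of e)))).
  - intros [[v p]|[c p]] [[v' p']|[c' p']]; simpl; try tauto.
    intros [_ [i [Hi Hx]]]. apply Hx. simpl. rewrite nth_error_map, Hi. reflexivity.
  - intros [[v p]|[c p]]; apply (proj2_sig p).
  - intros R s ps [_ Hps]. destruct s as [v|c]; exact (Hps (point _)).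
Qed.

Section Comparison.
Variables (P S T : signature) (A : structure P) (B : structure S) (C : structure T)
          (X : structure P).
Hypothesis finA : finite_structure A.

Notation Y := (kappa_arc A B X).
Notation G := (@F_ac S B Y).

Definition entries (e : pre A B X) (b : carrier B) : Prop :=
  exists i, snd (proj1_sig (pow_of e)) i = b.

Lemma entries_mk (s : site X) (p : pow_carrier B (slot A s)) b :
  entries (mk s p) b <-> exists i, snd (proj1_sig p) i = b.
Proof. destruct s; reflexivity. Qed.

(* Identified elements take the same values: a function [b] on [F_{v_i}]
   and [b o pi_i] on [C_c] have the same range, because [pi_i] maps [C_c]
   onto [F_{v_i}] by arc consistency. *)
Lemma entries_gen (e1 e2 : pre A B X) b : gen e1 e2 -> (entries e1 b <-> entries e2 b).
Proof.
  destruct e1 as [[v p]|[c p]]; destruct e2 as [[v' p']|[c' p']]; simpl; try tauto.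
  intros [_ [i [Hi Hx]]]. unfold entries; simpl. split.
  - intros [[t [Hr Hf]] <-].
    destruct (Forall2_nth_error _ Hf Hi) as [a [Ha Hva]].
    exists (exist _ a Hva). symmetry. apply Hx. exact Ha.
  - intros [[a Ha] <-]. destruct c as [[R vs] HR]; simpl in *.
    destruct (proj2 (F_ac_closed finA Ha) R vs i HR Hi) as [t [Ht Hta]].
    exists (exist _ t Ht). apply Hx. exact Hta.
Qed.

Lemma entries_equiv (e1 e2 : pre A B X) : pre_equiv e1 e2 ->
  forall b, entries e1 b <-> entries e2 b.
Proof.
  induction 1 as [e1 e2 Hgen| |e1 e2 _ IH|e1 e2 e3 _ IH1 _ IH2]; intros b.
  - apply entries_gen; auto.
  - tauto.
  - rewrite IH; tauto.
  - rewrite IH1; auto.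
Qed.

Lemma kappa_constraint R ys : rel Y R ys ->
  exists s (ps : list (pow_carrier B (slot A s))),
    rel (pow B (slot A s)) R ps /\ ys = map (fun p => cls (mk s p)) ps.
Proof.
  intros [es [Hes ->]]. apply copy_rel_mk in Hes.
  destruct Hes as [s [ps [Hps ->]]]. exists s, ps. rewrite map_map. auto.
Qed.

Lemma column_in_constraint (F : family B Y) R (s : site X)
  (ps : list (pow_carrier B (slot A s))) (i : slot A s) :
  (forall p j, F (cls (mk s p)) (snd (proj1_sig p) j)) -> rel (pow B (slot A s)) R ps ->
  in_constraint F R (map (fun p => cls (mk s p)) ps) (column ps i).
Proof.
  intros HF [_ Hrel]. split; [apply Hrel|]. apply Forall2_map_both. auto.
Qed.

Lemma entries_G (e : pre A B X) b : entries e b -> G (cls e) b.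
Proof.
  intros Hb. apply (@ac_closed_F_ac S B Y
           (fun (y : carrier Y) b => exists e, cls e = y /\ entries e b));
    [clear e b Hb|eauto].
  intros y b [e [<- [i <-]]]. split.
  { rewrite (proj2_sig (pow_of e) i). symmetry. apply pre_srt_of. }
  intros R ys j HR Hj. destruct (kappa_constraint HR) as [s [ps [Hps ->]]].
  destruct (nth_error_map_inv _ _ _ Hj) as [pj [Hpj Hcls]].
  assert (Hpe : entries (mk s pj) (snd (proj1_sig (pow_of e)) i))
    by (apply (entries_equiv (proj1 (cls_eq _ _) Hcls)); exists i; auto).
  destruct (proj1 (entries_mk s pj _) Hpe) as [a Ha].
  exists (column ps a). split.
  - apply column_in_constraint; auto.
    intros p k. exists (mk s p). split; auto. apply entries_mk. eauto.
  - unfold column. rewrite (map_nth_error _ _ _ Hpj), Ha. reflexivity.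
Qed.

Lemma rep_entries_G (y : carrier Y) : forall b, entries (rep y) b -> G y b.
Proof. intros b Hb. rewrite <- (cls_rep y). apply entries_G; auto. Qed.

Definition restrict (y : carrier Y) (e : pre A B X) (H : forall b, entries e b -> G y b)
  : slot A (site_of e) -> Fsub B y :=
  fun i => exist _ (snd (proj1_sig (pow_of e)) i) (H _ (ex_intro _ i eq_refl)).

Definition target (y : carrier Y) (g : pow_carrier C (Fsub B y)) (e : pre A B X)
  (H : forall b, entries e b -> G y b) : pre A C X :=
  mk (site_of e) (precomp g (restrict H)).

Lemma target_equiv (y : carrier Y) (g : pow_carrier C (Fsub B y)) (e1 e2 : pre A B X) : pre_equiv e1 e2 ->
  forall (H1 : forall b, entries e1 b -> G y b) (H2 : forall b, entries e2 b -> G y b),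
  pre_equiv (target g H1) (target g H2).
Proof.
  induction 1 as [e1 e2 Hgen|e|e1 e2 _ IH|e1 e2 e3 H12 IH1 _ IH2]; intros H1 H2.
  - apply rst_step.
    destruct e1 as [[v p]|[c p]]; destruct e2 as [[v' p']|[c' p']]; simpl in *; try tauto.
    destruct Hgen as [_ [i [Hi Hx]]]. split; auto. exists i. split; auto.
    intros x z Hxz. unfold restrict; simpl. f_equal. apply subset_eq_compat, Hx, Hxz.
  - rewrite (proof_irrelevance _ H1 H2). apply rst_refl.
  - apply rst_sym, IH.
  - assert (H3 : forall b, entries e2 b -> G y b)
      by (intros b Hb; apply H1, (entries_equiv H12); auto).
    eapply rst_trans; [apply (IH1 H1 H3)|apply IH2].
Qed.

Definition constraint_site (d : constraint Y) :
  { s : site X & { ps : list (pow_carrier B (slot A s)) |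
      rel (pow B (slot A s)) (fst (proj1_sig d)) ps /\
      snd (proj1_sig d) = map (fun p => cls (mk s p)) ps } } :=
  let (s, H) := constructive_indefinite_description _ (kappa_constraint (proj2_sig d)) in
  existT _ s (constructive_indefinite_description _ H).

Lemma column_G (s : site X) (ps : list (pow_carrier B (slot A s))) (i : slot A s) R ys :
  rel (pow B (slot A s)) R ps -> ys = map (fun p => cls (mk s p)) ps ->
  in_constraint G R ys (column ps i).
Proof.
  intros Hps ->. apply column_in_constraint; auto.
  intros p j. apply entries_G, entries_mk. eauto.
Qed.

(* Each site of [Y] (an element [y] or a constraint [d] of [Y]) is assigned a
   site [s] of [X] and a map from the index set of [s] (for [A]) to that of
   [y] or [d] (for [B]): for [y], the values of a representative; for [d],
   the columns of the relation of the copy that [d] comes from. *)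
Definition site_map (sigma : site Y) : { s : site X & slot A s -> slot B sigma } :=
  match sigma return { s : site X & slot A s -> slot B sigma } with
  | inl y => existT _ (site_of (rep y)) (restrict (@rep_entries_G y))
  | inr d =>
      let (s, Hps) := constraint_site d in
      existT _ s (fun i => exist _ (column (proj1_sig Hps) i)
                    (@column_G s _ i _ _ (proj1 (proj2_sig Hps)) (proj2 (proj2_sig Hps))))
  end.

Definition compare (e : pre B C Y) : pre A C X :=
  mk (projT1 (site_map (site_of e))) (precomp (pow_of e) (projT2 (site_map (site_of e)))).

Lemma compare_mk (sigma : site Y) (g : pow_carrier C (slot B sigma)) :
  compare (mk sigma g) = mk (projT1 (site_map sigma)) (precomp g (projT2 (site_map sigma))).
Proof. destruct sigma; reflexivity. Qed.

Lemma compare_srt (e : pre B C Y) : pre_srt (compare e) = pre_srt e.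
Proof. unfold compare. rewrite pre_srt_mk, (pre_srt_of e). reflexivity. Qed.

Lemma target_mk (y : carrier Y) (g : pow_carrier C (Fsub B y)) (s : site X)
  (p : pow_carrier B (slot A s)) (H : forall b, entries (mk s p) b -> G y b)
  (h : pow_carrier C (slot A s)) :
  fst (proj1_sig h) = fst (proj1_sig g) ->
  (forall i Hb, snd (proj1_sig h) i = snd (proj1_sig g) (exist _ (snd (proj1_sig p) i) Hb)) ->
  target g H = mk s h.
Proof.
  intros Hfst Hsnd. unfold target.
  destruct s; simpl; do 2 f_equal; apply pow_ext; simpl; auto;
    intros i; symmetry; apply Hsnd.
Qed.

(* [compare] respects the identifications of step (6) for [kappa_arc B C Y]:
   if [y] is the [j]-th entry of the constraint [d], the [j]-th projection
   from [C_d] to [F_y] is compatible with the chosen site maps. *)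
Lemma compare_gen (e1 e2 : pre B C Y) : gen e1 e2 -> pre_equiv (compare e1) (compare e2).
Proof.
  destruct e1 as [[y1 g1]|[d g']]; destruct e2 as [[y g]|[d2 g2]]; simpl; try tauto.
  intros [Hfst [j [Hj Hx]]]. unfold compare; simpl.
  destruct (constraint_site d) as [s [ps [Hps Hys]]]; simpl.
  assert (Hj' : nth_error (map (fun p => cls (mk s p)) ps) j = Some y)
    by (rewrite <- Hys; exact Hj).
  destruct (nth_error_map_inv _ _ _ Hj') as [pj [Hpj Hy]].
  assert (Hequiv : pre_equiv (rep y) (mk s pj)) by (apply cls_eq; rewrite cls_rep; auto).
  assert (H' : forall b, entries (mk s pj) b -> G y b)
    by (intros b Hb; rewrite Hy; apply entries_G, Hb).
  apply rst_sym. eapply rst_trans; [apply (target_equiv g Hequiv _ H')|].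
  erewrite (@target_mk y g s pj H' _); [apply rst_refl|exact Hfst|].
  intros i Hb. apply Hx. simpl. unfold column. rewrite (map_nth_error _ _ _ Hpj). reflexivity.
Qed.

Lemma kappa_compose : hom (kappa_arc B C Y) (kappa_arc A C X).
Proof.
  apply (kappa_hom_of_pre (kappa_arc A C X) (fun e => cls (compare e))).
  - intros e1 e2 H. apply cls_eq, compare_gen, H.
  - intros e. apply compare_srt.
  - intros R sigma gs Hgs.
    exists (map (fun g => compare (mk sigma g)) gs). split; [|rewrite map_map; reflexivity].
    apply copy_rel_mk. exists (projT1 (site_map sigma)),
      (map (fun g => precomp g (projT2 (site_map sigma))) gs).
    split; [apply pow_rel_precomp, Hgs|].
    rewrite map_map. apply map_ext. intros g. apply compare_mk.
Qed.

End Comparison.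

Theorem mainTheorem15 (P S T : signature)
  (A A' : structure P) (B B' : structure S) (C C' : structure T) :
  promise_template A A' -> promise_template B B' -> promise_template C C' ->
  ac_reduces A A' B B' -> ac_reduces B B' C C' ->
  ac_reduces A A' C C'.
Proof.
  intros [finP [_ [_ [finA _]]]] [[finS _] [_ [_ [finB _]]]] _ HAB HBC X wfX finX.
  split.
  - apply kappa_complete.
  - intros HkC'.
    pose (Y := kappa_arc A B X).
    assert (HY : hom (kappa_arc B C Y) C')
      by (eapply hom_comp; [apply kappa_compose, finA|exact HkC']).
    apply (proj2 (HAB X wfX finX)).
    apply (HBC Y); [apply kappa_wf|apply kappa_finite; auto|exact HY].
Qed.
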